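(* Let $\mathcal U=(V,\tilde V,W,\tilde W,R)$ be a gradient space such that the map $\mathrm{Sob}(\mathcal U)\to W$, $u\mapsto g_u$, is linear, and let $\mathcal K_0\subseteq\mathrm{Sob}(\mathcal U)$ be a nonempty linear subspace which is closed with respect to the norm of $V$ and is a Poincaré set. Then for every $f\in\mathrm{Sob}(\mathcal U)$ the Dirichlet problem with respect to $\mathcal K_f=\mathcal K_0+f$ has a unique solution.
   Context: Let $\tilde V,\tilde W$ be vector spaces over $\mathbf R$ or $\mathbf C$. A gradient relation is a set $R\subseteq\tilde V\times\tilde W$ such that (G1) if $(u,g)\in R$ and $(u',g')\in R$ then $(u+u',g+g')\in R$; (G2) if $(u,g)\in R$ and $\alpha>0$ then $(\alpha u,\alpha g)\in R$. A gradient space $\mathcal U=(V,\tilde V,W,\tilde W,R)$ consists of vector spaces $\tilde V,\tilde W$, a gradient relation $R\subseteq\tilde V\times\tilde W$, and linear subspaces $V\subseteq\tilde V$, $W\subseteq\tilde W$ such that: (GS1) $V$ is a reflexive Banach space with norm $\|\cdot\|_V$; (GS2) $W$ is a reflexive and strictly convex Banach space with norm $\|\cdot\|_W$; (GS3) if $(u,g)\in R$ with $u\in V$, $g\in W$, then there exists $g'\in W$ with $(-u,g')\in R$; (GS4) if $u,u_i\in V$ and $g,g_i\in W$ with $(u_i,g_i)\in R$ for $i=1,2,\dots$, $\|u-u_i\|_V\to0$ and $\|g-g_i\|_W\to0$, then $(u,g)\in R$. The Sobolev space of $\mathcal U$ is $\mathrm{Sob}(\mathcal U)=\{u\in V:(u,g)\in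 R\text{ for some }g\in W\}$. Each $u\in\mathrm{Sob}(\mathcal U)$ has a unique minimal gradient $g_u\in W$: $(u,g_u)\in R$ and $\|g_u\|_W\le\|g\|_W$ for all $g\in W$ with $(u,g)\in R$. A Poincaré set is a subset $A\subseteq\mathrm{Sob}(\mathcal U)$ for which there is $C>0$ such that $\|u\|_V\le C\|g\|_W$ for all $u\in A$ and all $g\in W$ with $(u,g)\in R$. For $\mathcal K_0\subseteq\mathrm{Sob}(\mathcal U)$ and $f\in\mathrm{Sob}(\mathcal U)$, $\mathcal K_f=\mathcal K_0+f=\{v\in\mathrm{Sob}(\mathcal U):v-f\in\mathcal K_0\}$; a solution of the Dirichlet problem with respect to $\mathcal K_f$ is $u\in\mathcal K_f$ with $\|g_u\|_W=\inf_{v\in\mathcal K_f}\|g_v\|_W$. *)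

From Stdlib Require Import Reals.
Open Scope R_scope.

Record VecSpace := {
  vs_car :> Type;
  vs_zero : vs_car;
  vs_add : vs_car -> vs_car -> vs_car;
  vs_opp : vs_car -> vs_car;
  vs_scal : R -> vs_car -> vs_car;
  vs_add_assoc : forall x y z, vs_add x (vs_add y z) = vs_add (vs_add x y) z;
  vs_add_comm : forall x y, vs_add x y = vs_add y x;
  vs_add_0 : forall x, vs_add vs_zero x = x;
  vs_add_opp : forall x, vs_add x (vs_opp x) = vs_zero;
  vs_scal_assoc : forall a b x, vs_scal a (vs_scal b x) = vs_scal (a * b) x;
  vs_scal_1 : forall x, vs_scal 1 x = x;
  vs_scal_distr_v : forall a x y, vs_scal a (vs_add x y) = vs_add (vs_scal a x) (vs_scal a y);
  vs_scal_distr_s : forall a b x, vs_scal (a + b) x = vs_add (vs_scal a x) (vs_scal b x)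
}.

Arguments vs_zero {v}.
Arguments vs_add {v}.
Arguments vs_opp {v}.
Arguments vs_scal {v}.

Definition vs_sub {X : VecSpace} (x y : X) : X := vs_add x (vs_opp y).

Definition is_linear {X Y : VecSpace} (f : X -> Y) : Prop :=
  (forall x y, f (vs_add x y) = vs_add (f x) (f y)) /\
  (forall a x, f (vs_scal a x) = vs_scal a (f x)).

Record NormedSpace := {
  ns_vs :> VecSpace;
  ns_norm : ns_vs -> R;
  ns_norm_def : forall x, ns_norm x = 0 -> x = vs_zero;
  ns_norm_scal : forall a x, ns_norm (vs_scal a x) = Rabs a * ns_norm x;
  ns_norm_triangle : forall x y, ns_norm (vs_add x y) <= ns_norm x + ns_norm y
}.

Arguments ns_norm {n}.

Definition converges {X : NormedSpace} (x : nat -> X) (l : X) : Prop :=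
  forall eps, 0 < eps -> exists N, forall n, (N <= n)%nat -> ns_norm (vs_sub (x n) l) < eps.

Definition cauchy {X : NormedSpace} (x : nat -> X) : Prop :=
  forall eps, 0 < eps -> exists N, forall m n, (N <= m)%nat -> (N <= n)%nat ->
    ns_norm (vs_sub (x m) (x n)) < eps.

Definition complete (X : NormedSpace) : Prop :=
  forall x : nat -> X, cauchy x -> exists l, converges x l.

Definition bounded_by {X : NormedSpace} (f : X -> R) (M : R) : Prop :=
  is_linear (Y := Build_VecSpace R 0 Rplus Ropp Rmult
      (fun x y z => eq_sym (Rplus_assoc x y z)) Rplus_comm Rplus_0_l Rplus_opp_r
      (fun a b x => eq_sym (Rmult_assoc a b x)) Rmult_1_l Rmult_plus_distr_l
      Rmult_plus_distr_r) f
  /\ forall x, Rabs (f x) <= M * ns_norm x.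

Definition dual_elt {X : NormedSpace} (f : X -> R) : Prop := exists M, bounded_by f M.

(** Reflexivity: every continuous linear functional [Phi] on the dual [X*]
    (with the dual norm ||f||* = inf {M | bounded_by f M}) is the evaluation
    at some point of [X], i.e. the canonical embedding X -> X** is onto. *)
Definition reflexive (X : NormedSpace) : Prop :=
  forall Phi : (X -> R) -> R,
    (forall f g, dual_elt f -> dual_elt g -> Phi (fun x => f x + g x) = Phi f + Phi g) ->
    (forall a f, dual_elt f -> Phi (fun x => a * f x) = a * Phi f) ->
    (exists C, forall f M, bounded_by f M -> Rabs (Phi f) <= C * M) ->
    exists x : X, forall f, dual_elt f -> Phi f = f x.

Definition strictly_convex (X : NormedSpace) : Prop :=
  forall x y : X, ns_norm x = 1 -> ns_norm y = 1 -> x <> y ->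
    ns_norm (vs_scal (/ 2) (vs_add x y)) < 1.

Definition banach (X : NormedSpace) : Prop := complete X.

Definition gradient_relation {Vt Wt : VecSpace} (Rel : Vt -> Wt -> Prop) : Prop :=
  (forall u g u' g', Rel u g -> Rel u' g' -> Rel (vs_add u u') (vs_add g g')) /\
  (forall u g a, Rel u g -> 0 < a -> Rel (vs_scal a u) (vs_scal a g)).

(** Gradient space (V, Vt, W, Wt, Rel).  The linear subspaces V of Vt and W of Wt
    are given as normed spaces together with injective linear embeddings iV, iW. *)
Definition gradient_space (V : NormedSpace) (Vt : VecSpace) (W : NormedSpace) (Wt : VecSpace)
  (iV : V -> Vt) (iW : W -> Wt) (Rel : Vt -> Wt -> Prop) : Prop :=
  is_linear iV /\ (forall x y, iV x = iV y -> x = y) /\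
  is_linear iW /\ (forall x y, iW x = iW y -> x = y) /\
  gradient_relation Rel /\
  (banach V /\ reflexive V) /\
  (banach W /\ reflexive W /\ strictly_convex W) /\
  (forall (u : V) (g : W), Rel (iV u) (iW g) ->
               exists g' : W, Rel (iV (vs_opp u)) (iW g')) /\
  (forall (u : V) (ui : nat -> V) (g : W) (gi : nat -> W),
               (forall i, Rel (iV (ui i)) (iW (gi i))) ->
               converges ui u -> converges gi g -> Rel (iV u) (iW g)).

Definition Sob {V : NormedSpace} {Vt : VecSpace} {W : NormedSpace} {Wt : VecSpace}
  (iV : V -> Vt) (iW : W -> Wt) (Rel : Vt -> Wt -> Prop) (u : V) : Prop :=
  exists g : W, Rel (iV u) (iW g).

Definition is_min_gradient {V : NormedSpace} {Vt : VecSpace} {W : NormedSpace} {Wt : VecSpace}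
  (iV : V -> Vt) (iW : W -> Wt) (Rel : Vt -> Wt -> Prop) (u : V) (g : W) : Prop :=
  Rel (iV u) (iW g) /\ forall g' : W, Rel (iV u) (iW g') -> ns_norm g <= ns_norm g'.

Definition poincare_set {V : NormedSpace} {Vt : VecSpace} {W : NormedSpace} {Wt : VecSpace}
  (iV : V -> Vt) (iW : W -> Wt) (Rel : Vt -> Wt -> Prop) (A : V -> Prop) : Prop :=
  (forall u, A u -> Sob iV iW Rel u) /\
  exists C, 0 < C /\ forall u (g : W), A u -> Rel (iV u) (iW g) -> ns_norm u <= C * ns_norm g.

Definition Kf {V : NormedSpace} {Vt : VecSpace} {W : NormedSpace} {Wt : VecSpace}
  (iV : V -> Vt) (iW : W -> Wt) (Rel : Vt -> Wt -> Prop) (K0 : V -> Prop) (f : V) (v : V) : Prop :=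
  Sob iV iW Rel v /\ K0 (vs_sub v f).

(** u solves the Dirichlet problem w.r.t. K_f: u in K_f and
    ||g_u|| = inf_{v in K_f} ||g_v|| (the infimum being attained at u). *)
Definition dirichlet_solution {V : NormedSpace} {Vt : VecSpace} {W : NormedSpace} {Wt : VecSpace}
  (iV : V -> Vt) (iW : W -> Wt) (Rel : Vt -> Wt -> Prop) (gr : V -> W)
  (K0 : V -> Prop) (f : V) (u : V) : Prop :=
  Kf iV iW Rel K0 f u /\
  forall v, Kf iV iW Rel K0 f v -> ns_norm (gr u) <= ns_norm (gr v).

(* Since taking minimal gradients is linear, the gradients of the admissible functions form the
   affine set g_f + M in W, where M = {g_k | k in K_0} is a linear subspace, and a solution is a
   point of g_f + M of least norm.  M is closed: if g_{k_n} converges, the Poincare inequality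
   makes (k_n) Cauchy in V, its limit k lies in K_0, and the closedness (GS4) of the gradient
   relation identifies g_k with the limit.  In a reflexive space every closed subspace contains a
   nearest point to any given point: the functional f |-> f(y) on the annihilator of M is
   dominated by dist(y, M) ||f||*, so by Hahn-Banach it extends to the whole dual with norm at most
   dist(y, M); reflexivity represents it by some z in W, and z - y is then a nearest point of M.
   For uniqueness, two solutions have gradients of equal norm; by strict convexity they must
   coincide, since otherwise their midpoint, also admissible, would do strictly better; and then
   the Poincare inequality applied to their difference, which lies in K_0, shows they are equal. *)

From Stdlib Require Import Reals Lra Lia ClassicalEpsilon Classical FunctionalExtensionality.
From mathcomp Require classical_sets boolp.
Open Scope R_scope.
Set Bullet Behavior "Strict Subproofs".

Section VectorAlgebra.
Variable X : VecSpace.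
Implicit Types x y z : X.

Lemma vs_add_0_r x : vs_add x vs_zero = x.
Proof. rewrite vs_add_comm. apply vs_add_0. Qed.

Lemma vs_add_opp_l x : vs_add (vs_opp x) x = vs_zero.
Proof. rewrite vs_add_comm. apply vs_add_opp. Qed.

Lemma vs_add_cancel_l z x y : vs_add z x = vs_add z y -> x = y.
Proof.
  intro H. rewrite <- (vs_add_0 X x), <- (vs_add_0 X y), <- (vs_add_opp_l z).
  rewrite <- !vs_add_assoc, H. reflexivity.
Qed.

Lemma vs_scal_0_l x : vs_scal 0 x = vs_zero.
Proof.
  apply (vs_add_cancel_l (vs_scal 0 x)).
  rewrite vs_add_0_r, <- vs_scal_distr_s, Rplus_0_l. reflexivity.
Qed.

Lemma vs_scal_0_r a : vs_scal a (@vs_zero X) = vs_zero.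
Proof. rewrite <- (vs_scal_0_l vs_zero) at 1. rewrite vs_scal_assoc, Rmult_0_r. apply vs_scal_0_l. Qed.

Lemma vs_opp_unique x y : vs_add x y = vs_zero -> y = vs_opp x.
Proof. intro H. apply (vs_add_cancel_l x). rewrite H, vs_add_opp. reflexivity. Qed.

Lemma vs_scal_m1 x : vs_scal (-1) x = vs_opp x.
Proof.
  apply vs_opp_unique. rewrite <- (vs_scal_1 X x) at 1. rewrite <- vs_scal_distr_s.
  replace (1 + -1) with 0 by ring. apply vs_scal_0_l.
Qed.

Lemma vs_opp_opp x : vs_opp (vs_opp x) = x.
Proof. symmetry. apply vs_opp_unique, vs_add_opp_l. Qed.

Lemma vs_scal_opp a x : vs_scal a (vs_opp x) = vs_scal (- a) x.
Proof. rewrite <- vs_scal_m1, vs_scal_assoc. f_equal. ring. Qed.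

Lemma vs_opp_add x y : vs_opp (vs_add x y) = vs_add (vs_opp x) (vs_opp y).
Proof. rewrite <- !vs_scal_m1. apply vs_scal_distr_v. Qed.

Lemma vs_add_ACA x y z (w : X) :
  vs_add (vs_add x y) (vs_add z w) = vs_add (vs_add x z) (vs_add y w).
Proof. rewrite <- !vs_add_assoc. f_equal. rewrite !vs_add_assoc. f_equal. apply vs_add_comm. Qed.

Lemma vs_add_subK x y : vs_add y (vs_sub x y) = x.
Proof. unfold vs_sub. rewrite vs_add_comm, <- vs_add_assoc, vs_add_opp_l. apply vs_add_0_r. Qed.

Lemma vs_sub_addK x y : vs_sub (vs_add y x) y = x.
Proof. unfold vs_sub. rewrite vs_add_comm, vs_add_assoc, vs_add_opp_l. apply vs_add_0. Qed.

Lemma vs_sub_eq0 x y : vs_sub x y = vs_zero -> x = y.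
Proof. intro H. apply vs_opp_unique in H. rewrite <- (vs_opp_opp x), <- H. apply vs_opp_opp. Qed.

Lemma vs_sub_opp x y : vs_sub y x = vs_opp (vs_sub x y).
Proof. unfold vs_sub. rewrite vs_opp_add, vs_opp_opp. apply vs_add_comm. Qed.

Lemma vs_sub_sub_r x y z : vs_sub (vs_sub x z) (vs_sub y z) = vs_sub x y.
Proof. unfold vs_sub. rewrite vs_opp_add, vs_opp_opp, vs_add_ACA, vs_add_opp_l, vs_add_0_r. reflexivity. Qed.

Lemma vs_sub_midpoint x y z :
  vs_sub (vs_scal (/ 2) (vs_add x y)) z = vs_scal (/ 2) (vs_add (vs_sub x z) (vs_sub y z)).
Proof.
  unfold vs_sub. rewrite vs_add_ACA, (vs_scal_distr_v X (/ 2) (vs_add x y)). f_equal.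
  rewrite <- (vs_scal_1 X (vs_opp z)) at 2 3. rewrite <- vs_scal_distr_s, vs_scal_assoc.
  replace (/ 2 * (1 + 1)) with 1 by field. symmetry. apply vs_scal_1.
Qed.

End VectorAlgebra.

Section NormFacts.
Variable X : NormedSpace.
Implicit Types x y z : X.

Lemma ns_norm_zero : ns_norm (@vs_zero X) = 0.
Proof. rewrite <- (vs_scal_0_l X vs_zero), ns_norm_scal, Rabs_R0. ring. Qed.

Lemma ns_norm_opp x : ns_norm (vs_opp x) = ns_norm x.
Proof. rewrite <- vs_scal_m1, ns_norm_scal, Rabs_left by lra. ring. Qed.

Lemma ns_norm_ge0 x : 0 <= ns_norm x.
Proof.
  pose proof (ns_norm_triangle X x (vs_opp x)) as H.
  rewrite vs_add_opp, ns_norm_zero, ns_norm_opp in H. lra.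
Qed.

Lemma ns_norm_sub_sym x y : ns_norm (vs_sub x y) = ns_norm (vs_sub y x).
Proof. rewrite (vs_sub_opp X x y). symmetry. apply ns_norm_opp. Qed.

Lemma ns_norm_sub_triangle x y z :
  ns_norm (vs_sub x z) <= ns_norm (vs_sub x y) + ns_norm (vs_sub y z).
Proof.
  replace (vs_sub x z) with (vs_add (vs_sub x y) (vs_sub y z)); [apply ns_norm_triangle|].
  unfold vs_sub. rewrite <- vs_add_assoc, (vs_add_assoc X (vs_opp y)), vs_add_opp_l, vs_add_0.
  reflexivity.
Qed.

Lemma ns_norm_eq0 x : ns_norm x <= 0 -> x = vs_zero.
Proof. intro H. apply ns_norm_def, Rle_antisym; [exact H | apply ns_norm_ge0]. Qed.

Lemma strictly_convex_midpoint x y : strictly_convex X -> x <> y -> ns_norm x = ns_norm y ->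
  ns_norm (vs_scal (/ 2) (vs_add x y)) < ns_norm x.
Proof.
  intros Hsc Hxy Hn. set (d := ns_norm x).
  destruct (ns_norm_ge0 x) as [Hd|Hd]; fold d in Hd.
  - assert (Hunit : forall z, ns_norm z = d -> ns_norm (vs_scal (/ d) z) = 1).
    { intros z Hz. rewrite ns_norm_scal, Rabs_pos_eq, Hz by (left; apply Rinv_0_lt_compat; lra).
      field. lra. }
    assert (Hmid : vs_scal (/ 2) (vs_add x y)
                   = vs_scal d (vs_scal (/ 2) (vs_add (vs_scal (/ d) x) (vs_scal (/ d) y)))).
    { rewrite <- vs_scal_distr_v, !vs_scal_assoc. f_equal. field. lra. }
    assert (Hne : vs_scal (/ d) x <> vs_scal (/ d) y).
    { intro E. apply Hxy. rewrite <- (vs_scal_1 X x), <- (vs_scal_1 X y).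
      replace 1 with (d * / d) by (field; lra). rewrite <- !vs_scal_assoc, E. reflexivity. }
    pose proof (Hsc _ _ (Hunit x eq_refl) (Hunit y (eq_sym Hn)) Hne) as Hlt.
    rewrite Hmid, ns_norm_scal, Rabs_pos_eq by lra.
    fold d. nra.
  - exfalso. apply Hxy. rewrite (ns_norm_def _ _ (eq_sym Hd)), (ns_norm_def _ y); [reflexivity|].
    rewrite <- Hn. symmetry. exact Hd.
Qed.

End NormFacts.

(* A total supremum function; junk value [0] on empty or unbounded sets. *)
Definition sup_of (E : R -> Prop) : R :=
  match excluded_middle_informative (bound E /\ exists x, E x) with
  | left h => proj1_sig (completeness E (proj1 h) (proj2 h))
  | right _ => 0
  end.

Lemma sup_of_lub E : bound E -> (exists x, E x) -> is_lub E (sup_of E).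
Proof.
  intros Hb He. unfold sup_of. destruct excluded_middle_informative as [h|h].
  - exact (proj2_sig (completeness E (proj1 h) (proj2 h))).
  - tauto.
Qed.

Lemma sup_of_ub E x : bound E -> E x -> x <= sup_of E.
Proof. intros Hb Hx. exact (proj1 (sup_of_lub E Hb (ex_intro _ x Hx)) x Hx). Qed.

Lemma sup_of_least E b : (exists x, E x) -> (forall x, E x -> x <= b) -> sup_of E <= b.
Proof. intros He Hb. exact (proj2 (sup_of_lub E (ex_intro _ b Hb) He) b Hb). Qed.

Definition inf_of (E : R -> Prop) : R := - sup_of (fun r => E (- r)).

Lemma inf_of_lb E x : (exists b, forall y, E y -> b <= y) -> E x -> inf_of E <= x.
Proof.
  intros [b Hb] Hx. unfold inf_of.
  enough (- x <= sup_of (fun r => E (- r))) by lra.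
  apply sup_of_ub.
  - exists (- b). intros r Hr. specialize (Hb _ Hr). lra.
  - rewrite Ropp_involutive. exact Hx.
Qed.

Lemma inf_of_greatest E c : (exists x, E x) -> (forall y, E y -> c <= y) -> c <= inf_of E.
Proof.
  intros [x Hx] Hc. unfold inf_of.
  enough (sup_of (fun r => E (- r)) <= - c) by lra.
  apply sup_of_least.
  - exists (- x). rewrite Ropp_involutive. exact Hx.
  - intros r Hr. specialize (Hc _ Hr). lra.
Qed.

Lemma inf_of_approx E eps : (exists b, forall y, E y -> b <= y) -> (exists x, E x) -> 0 < eps ->
  exists x, E x /\ x < inf_of E + eps.
Proof.
  intros Hb He Heps. apply NNPP. intro Hn.
  enough (inf_of E + eps <= inf_of E) by lra.
  apply inf_of_greatest; auto.
  intros y Hy. apply Rnot_lt_le. intro Hlt. apply Hn. exists y. auto.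
Qed.

Definition is_subspace {X : VecSpace} (S : X -> Prop) : Prop :=
  S vs_zero /\ (forall x y, S x -> S y -> S (vs_add x y)) /\ (forall a x, S x -> S (vs_scal a x)).

Definition linear_on {X : VecSpace} (S : X -> Prop) (g : X -> R) : Prop :=
  (forall x y, S x -> S y -> g (vs_add x y) = g x + g y) /\
  (forall a x, S x -> g (vs_scal a x) = a * g x).

Definition sublinear_on {X : VecSpace} (S : X -> Prop) (p : X -> R) : Prop :=
  (forall x y, S x -> S y -> p (vs_add x y) <= p x + p y) /\
  (forall t x, 0 < t -> S x -> p (vs_scal t x) <= t * p x).

Lemma subspace_full (X : VecSpace) : is_subspace (fun _ : X => True).
Proof. repeat split. Qed.

Lemma linear_on_zero {X : VecSpace} (E : X -> Prop) g : is_subspace E -> linear_on E g -> g vs_zero = 0.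
Proof. intros [E0 _] [_ Hs]. rewrite <- (vs_scal_0_l X vs_zero), Hs by exact E0. ring. Qed.

Lemma sublinear_on_scal_ge {X : VecSpace} (S : X -> Prop) p t x :
  is_subspace S -> sublinear_on S p -> 0 < t -> S x -> t * p x <= p (vs_scal t x).
Proof.
  intros [_ [_ Ss]] [_ ps] Ht Sx.
  pose proof (ps (/ t) (vs_scal t x) (Rinv_0_lt_compat _ Ht) (Ss t x Sx)) as H.
  rewrite vs_scal_assoc, Rinv_l, vs_scal_1 in H by lra.
  apply (Rmult_le_compat_l t) in H; [|lra].
  rewrite <- Rmult_assoc, Rinv_r, Rmult_1_l in H by lra. exact H.
Qed.

Section OneDimensionalExtension.
Variables (X : VecSpace) (S E : X -> Prop) (p g : X -> R).
Hypotheses (HS : is_subspace S) (Hp : sublinear_on S p) (HE : is_subspace E)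
  (HES : forall x, E x -> S x) (Hg : linear_on E g) (Hgp : forall x, E x -> g x <= p x).

Definition extendable_by (z : X) (c : R) : Prop := forall e, E e -> g e + c <= p (vs_add e z).

Lemma extendable_by_scal z c t : S z -> extendable_by z c -> 0 < t ->
  extendable_by (vs_scal t z) (t * c).
Proof.
  intros Sz Hc Ht e Ee. pose proof HE as [_ [_ Es]].
  set (e' := vs_scal (/ t) e).
  assert (He : e = vs_scal t e') by (unfold e'; rewrite vs_scal_assoc, Rinv_r, vs_scal_1 by lra; reflexivity).
  rewrite He, <- vs_scal_distr_v, (proj2 Hg) by (apply Es, Ee).
  eapply Rle_trans; [|apply (sublinear_on_scal_ge S); auto; apply (proj1 (proj2 HS)); auto].
  rewrite <- Rmult_plus_distr_l. apply Rmult_le_compat_l; [lra|]. apply Hc, Es, Ee.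
  apply HES, Es, Ee.
Qed.

Lemma extendable_by_exists y : S y -> exists c, extendable_by y c /\ extendable_by (vs_opp y) (- c).
Proof.
  intros Sy. pose proof HS as [_ [Sa Ss]]. pose proof HE as [E0 [Ea _]].
  assert (Sny : S (vs_opp y)) by (rewrite <- vs_scal_m1; auto).
  (* g e + g e' = g (e + e') <= p ((e - y) + (e' + y)) <= p (e - y) + p (e' + y) *)
  assert (key : forall e e', E e -> E e' -> g e - p (vs_add e (vs_opp y)) <= p (vs_add e' y) - g e').
  { intros e e' He He'.
    assert (H : g (vs_add e e') <= p (vs_add (vs_add e (vs_opp y)) (vs_add e' y))).
    { rewrite vs_add_ACA, vs_add_opp_l, vs_add_0_r. auto. }
    rewrite (proj1 Hg) in H by auto.
    pose proof (proj1 Hp (vs_add e (vs_opp y)) (vs_add e' y) ltac:(auto) ltac:(auto)). lra. }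
  set (A := fun r => exists e, E e /\ r = g e - p (vs_add e (vs_opp y))).
  assert (HA : exists r, A r) by (exists (g vs_zero - p (vs_add vs_zero (vs_opp y))), vs_zero; auto).
  assert (Hb : bound A).
  { exists (p (vs_add vs_zero y) - g vs_zero). intros r [e [He ->]]. auto. }
  exists (sup_of A). split; intros e He.
  - enough (sup_of A <= p (vs_add e y) - g e) by lra.
    apply sup_of_least; auto. intros r [e' [He' ->]]. auto.
  - enough (g e - p (vs_add e (vs_opp y)) <= sup_of A) by lra.
    apply sup_of_ub; auto. exists e. auto.
Qed.

Variable y : X.

Definition span_add (x : X) : Prop := exists e t, E e /\ x = vs_add e (vs_scal t y).

Definition extend_fun (c : R) (x : X) : R :=
  match excluded_middle_informative (span_add x) with
  | left h => let (e, h2) := constructive_indefinite_description _ h in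
              let (t, _) := constructive_indefinite_description _ h2 in g e + t * c
  | right _ => 0
  end.

Lemma span_add_unique e1 e2 t1 t2 : ~ E y -> E e1 -> E e2 ->
  vs_add e1 (vs_scal t1 y) = vs_add e2 (vs_scal t2 y) -> t1 = t2 /\ e1 = e2.
Proof.
  intros Hy H1 H2 H. pose proof HE as [_ [Ea Es]].
  assert (K : vs_scal (t1 - t2) y = vs_add (vs_opp e1) e2).
  { apply (vs_add_cancel_l X e1). rewrite vs_add_assoc, vs_add_opp, vs_add_0.
    unfold Rminus. rewrite vs_scal_distr_s, vs_add_assoc, H, <- vs_add_assoc, <- vs_scal_distr_s.
    rewrite Rplus_opp_r, vs_scal_0_l. apply vs_add_0_r. }
  destruct (Req_dec t1 t2) as [Ht|Ht].
  - subst t2. split; auto. rewrite !(vs_add_comm X _ (vs_scal t1 y)) in H.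
    exact (vs_add_cancel_l X _ _ _ H).
  - exfalso. apply Hy.
    replace y with (vs_scal (/ (t1 - t2)) (vs_scal (t1 - t2) y))
      by (rewrite vs_scal_assoc, Rinv_l, vs_scal_1 by lra; reflexivity).
    rewrite K. apply Es, Ea; auto. rewrite <- vs_scal_m1. auto.
Qed.

Lemma extend_fun_span c e t : ~ E y -> E e -> extend_fun c (vs_add e (vs_scal t y)) = g e + t * c.
Proof.
  intros Hy He. unfold extend_fun. destruct excluded_middle_informative as [h|h].
  - destruct (constructive_indefinite_description _ h) as [e' h2].
    destruct (constructive_indefinite_description _ h2) as [t' [He' Heq]].
    destruct (span_add_unique e e' t t' Hy He He' Heq) as [-> ->]. reflexivity.
  - exfalso. apply h. exists e, t. auto.
Qed.

Lemma span_add_subspace : is_subspace span_add.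
Proof.
  pose proof HE as [E0 [Ea Es]]. split; [|split].
  - exists vs_zero, 0. rewrite vs_scal_0_l, vs_add_0_r. auto.
  - intros x1 x2 [e1 [t1 [H1 ->]]] [e2 [t2 [H2 ->]]]. exists (vs_add e1 e2), (t1 + t2).
    rewrite vs_add_ACA, vs_scal_distr_s. auto.
  - intros a x [e [t [H ->]]]. exists (vs_scal a e), (a * t).
    rewrite vs_scal_distr_v, vs_scal_assoc. auto.
Qed.

Lemma extend_fun_linear c : ~ E y -> linear_on span_add (extend_fun c).
Proof.
  intros Hy. pose proof HE as [E0 [Ea Es]]. split.
  - intros x1 x2 [e1 [t1 [H1 ->]]] [e2 [t2 [H2 ->]]].
    rewrite vs_add_ACA, <- vs_scal_distr_s, !extend_fun_span, (proj1 Hg) by auto. ring.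
  - intros a x [e [t [H ->]]].
    rewrite vs_scal_distr_v, vs_scal_assoc, !extend_fun_span, (proj2 Hg) by auto. ring.
Qed.

Lemma extend_fun_dominated c : S y -> ~ E y -> extendable_by y c -> extendable_by (vs_opp y) (- c) ->
  forall x, span_add x -> extend_fun c x <= p x.
Proof.
  intros Sy Hy Hc Hc' x [e [t [He ->]]]. rewrite extend_fun_span by auto.
  destruct (Rtotal_order t 0) as [Hlt|[->|Hgt]].
  - assert (Sny : S (vs_opp y)) by (rewrite <- vs_scal_m1; apply HS, Sy).
    pose proof (extendable_by_scal _ _ (- t) Sny Hc' ltac:(lra) e He) as K.
    rewrite vs_scal_opp, Ropp_involutive in K. lra.
  - rewrite vs_scal_0_l, vs_add_0_r, Rmult_0_l, Rplus_0_r. auto.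
  - exact (extendable_by_scal _ _ t Sy Hc Hgt e He).
Qed.

Lemma extend_by_one c : S y -> ~ E y -> extendable_by y c -> extendable_by (vs_opp y) (- c) ->
  exists (E' : X -> Prop) (g' : X -> R), is_subspace E' /\ (forall x, E' x -> S x) /\
    (forall x, E x -> E' x) /\ (forall x, E x -> g' x = g x) /\ linear_on E' g' /\
    (forall x, E' x -> g' x <= p x) /\ E' y /\ g' y = c.
Proof.
  intros Sy Hy Hc Hc'. pose proof HS as [_ [Sa Ss]].
  assert (Hspan : forall x, E x -> x = vs_add x (vs_scal 0 y))
    by (intros; rewrite vs_scal_0_l, vs_add_0_r; reflexivity).
  assert (Hy1 : y = vs_add vs_zero (vs_scal 1 y)) by (rewrite vs_scal_1, vs_add_0; reflexivity).
  exists span_add, (extend_fun c).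
  split; [apply span_add_subspace|]. split; [intros x [e [t [He ->]]]; auto|].
  split; [intros x Hx; exists x, 0; auto|].
  split; [intros x Hx; rewrite (Hspan x Hx) at 1; rewrite extend_fun_span by auto; ring|].
  split; [apply extend_fun_linear, Hy|]. split; [apply extend_fun_dominated; auto|].
  split; [exists vs_zero, 1; split; [apply HE | exact Hy1]|].
  pose proof (extend_fun_span c vs_zero 1 Hy (proj1 HE)) as Hval.
  rewrite <- Hy1, (linear_on_zero E g HE Hg) in Hval. rewrite Hval. ring.
Qed.

End OneDimensionalExtension.

Lemma zorn_preorder (T : Type) (t0 : T) (P : T -> T -> Prop) :
  (forall t, P t t) -> (forall r s t, P r s -> P s t -> P r t) ->
  (forall A : T -> Prop, (forall s t, A s -> A t -> P s t \/ P t s) ->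
     exists t, forall s, A s -> P s t) ->
  exists t, forall s, P t s -> P s t.
Proof.
  intros Hrefl Htrans Hchain.
  assert (HP : forall a b, boolp.asbool (P a b) = true <-> P a b)
    by (intros a b; split; [apply (ssrbool.elimT (boolp.asboolP _)) | apply (ssrbool.introT (boolp.asboolP _))]).
  destruct (@classical_sets.ZL_preorder T t0 (fun a b => boolp.asbool (P a b))) as [t Ht].
  - intro t. apply HP. auto.
  - intros r s t H1 H2. apply HP. apply HP in H1, H2. eauto.
  - intros A HA. destruct (Hchain A) as [t Hts].
    + intros s t Hs Htt. destruct (HA s t Hs Htt) as [H|H]; apply HP in H; auto.
    + exists t. intros s Hs. apply HP. auto.
  - exists t. intros s Hs. apply HP, Ht, HP, Hs.
Qed.

Section HahnBanach.
Variables (X : VecSpace) (S D : X -> Prop) (p l : X -> R).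
Hypotheses (HS : is_subspace S) (Hp : sublinear_on S p) (HD : is_subspace D)
  (HDS : forall x, D x -> S x) (Hl : linear_on D l) (Hlp : forall x, D x -> l x <= p x).

Record extension := {
  ext_dom : X -> Prop;
  ext_fun : X -> R;
  ext_subspace : is_subspace ext_dom;
  ext_dom_S : forall x, ext_dom x -> S x;
  ext_dom_D : forall x, D x -> ext_dom x;
  ext_linear : linear_on ext_dom ext_fun;
  ext_dominated : forall x, ext_dom x -> ext_fun x <= p x;
  ext_fun_D : forall x, D x -> ext_fun x = l x
}.

Definition ext_le (a b : extension) : Prop :=
  (forall x, ext_dom a x -> ext_dom b x) /\ (forall x, ext_dom a x -> ext_fun a x = ext_fun b x).

Definition chain_fun (A : extension -> Prop) (x : X) : R :=
  match excluded_middle_informative (exists s, A s /\ ext_dom s x) with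
  | left h => ext_fun (proj1_sig (constructive_indefinite_description _ h)) x
  | right _ => 0
  end.

Lemma chain_upper_bound (A : extension -> Prop) :
  (forall s t, A s -> A t -> ext_le s t \/ ext_le t s) -> (exists s, A s) ->
  exists u, forall s, A s -> ext_le s u.
Proof.
  intros HA [s0 Hs0].
  set (EU := fun x => exists s, A s /\ ext_dom s x).
  assert (agree : forall s x, A s -> ext_dom s x -> chain_fun A x = ext_fun s x).
  { intros s x Hs Hx. unfold chain_fun. destruct excluded_middle_informative as [h|h].
    - destruct (constructive_indefinite_description _ h) as [s' [Hs' Hx']]. simpl.
      destruct (HA s s' Hs Hs') as [[_ H]|[_ H]]; [symmetry|]; auto.
    - exfalso. eauto. }
  assert (common : forall x y, EU x -> EU y -> exists s, A s /\ ext_dom s x /\ ext_dom s y).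
  { intros x y [s1 [A1 H1]] [s2 [A2 H2]].
    destruct (HA s1 s2 A1 A2) as [[H _]|[H _]]; [exists s2 | exists s1]; auto. }
  assert (HEU : is_subspace EU).
  { split; [|split].
    - exists s0. split; [|apply (ext_subspace s0)]; auto.
    - intros x y Hx Hy. destruct (common x y Hx Hy) as [s [As [Hx' Hy']]].
      exists s. split; [|apply (ext_subspace s)]; auto.
    - intros a x [s [As Hx]]. exists s. split; [|apply (ext_subspace s)]; auto. }
  assert (HlinU : linear_on EU (chain_fun A)).
  { split.
    - intros x y Hx Hy. destruct (common x y Hx Hy) as [s [As [Hx' Hy']]].
      rewrite !(agree s) by (auto; apply (ext_subspace s); auto). apply (ext_linear s); auto.
    - intros a x [s [As Hx]]. rewrite !(agree s) by (auto; apply (ext_subspace s); auto).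
      apply (ext_linear s); auto. }
  assert (HdomU : forall x, EU x -> chain_fun A x <= p x).
  { intros x [s [As Hx]]. rewrite (agree s) by auto. apply (ext_dominated s), Hx. }
  assert (HfunU : forall x, D x -> chain_fun A x = l x).
  { intros x Hx. rewrite (agree s0) by (auto; apply (ext_dom_D s0), Hx). apply (ext_fun_D s0), Hx. }
  exists {| ext_dom := EU; ext_subspace := HEU; ext_linear := HlinU;
            ext_dom_S := fun x h => match h with ex_intro s (conj _ Hx) => ext_dom_S s x Hx end;
            ext_dom_D := fun x h => ex_intro _ s0 (conj Hs0 (ext_dom_D s0 x h));
            ext_dominated := HdomU; ext_fun_D := HfunU |}.
  intros s Hs. split; simpl.
  - intros x Hx. exists s. auto.
  - intros x Hx. symmetry. apply agree; auto.
Qed.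

Lemma maximal_extension_total (t : extension) :
  (forall s, ext_le t s -> ext_le s t) -> forall x, S x -> ext_dom t x.
Proof.
  intros Hmax y Sy. apply NNPP. intro Hny.
  destruct (extendable_by_exists X S (ext_dom t) p (ext_fun t) HS Hp (ext_subspace t)
              (ext_dom_S t) (ext_linear t) (ext_dominated t) y Sy) as [c [Hc1 Hc2]].
  destruct (extend_by_one X S (ext_dom t) p (ext_fun t) HS Hp (ext_subspace t) (ext_dom_S t)
              (ext_linear t) (ext_dominated t) y c Sy Hny Hc1 Hc2)
    as [E' [g' [HE' [HE'S [HEE' [Hgg' [Hlin' [Hle' [HyE' _]]]]]]]]].
  set (s := {| ext_dom := E'; ext_fun := g'; ext_subspace := HE'; ext_dom_S := HE'S;
               ext_dom_D := fun x h => HEE' x (ext_dom_D t x h); ext_linear := Hlin';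
               ext_dominated := Hle';
               ext_fun_D := fun x h => eq_trans (Hgg' x (ext_dom_D t x h)) (ext_fun_D t x h) |}).
  assert (Hts : ext_le t s) by (split; intros x Hx; simpl; [auto | symmetry; auto]).
  exact (Hny (proj1 (Hmax s Hts) y HyE')).
Qed.

Theorem hahn_banach :
  exists F, linear_on S F /\ (forall x, S x -> F x <= p x) /\ (forall x, D x -> F x = l x).
Proof.
  set (t0 := {| ext_dom := D; ext_fun := l; ext_subspace := HD; ext_dom_S := HDS;
                ext_dom_D := fun x h => h; ext_linear := Hl; ext_dominated := Hlp;
                ext_fun_D := fun x _ => eq_refl |}).
  destruct (zorn_preorder extension t0 ext_le) as [t Hmax].
  - intro t. split; auto.
  - intros r s t [H1 H2] [H3 H4]. split; auto. intros x Hx. rewrite H2 by auto. auto.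
  - intros A HA. destruct (classic (exists s, A s)) as [Hne|Hne].
    + apply chain_upper_bound; auto.
    + exists t0. intros s Hs. exfalso. eauto.
  - pose proof (maximal_extension_total t Hmax) as Htot. exists (ext_fun t). split; [|split].
    + split; intros; apply (ext_linear t); auto.
    + intros x Hx. apply (ext_dominated t); auto.
    + apply (ext_fun_D t).
Qed.

End HahnBanach.

Section DistanceToSubspace.
Variables (X : NormedSpace) (M : X -> Prop).
Hypothesis HM : is_subspace M.

(* Written with [x + m] rather than [x - m]; the two agree since [M] is a subspace. *)
Definition dist_to (x : X) : R := inf_of (fun r => exists m, M m /\ r = ns_norm (vs_add x m)).

Definition seq_closed : Prop :=
  forall (w : nat -> X) l, (forall i, M (w i)) -> converges w l -> M l.

Let dist_set_lb x : exists b, forall r, (exists m, M m /\ r = ns_norm (vs_add x m)) -> b <= r.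
Proof. exists 0. intros r [m [_ ->]]. apply ns_norm_ge0. Qed.

Let dist_set_ne x : exists r, exists m, M m /\ r = ns_norm (vs_add x m).
Proof. exists (ns_norm (vs_add x vs_zero)), vs_zero. split; [apply HM | reflexivity]. Qed.

Lemma dist_to_le x m : M m -> dist_to x <= ns_norm (vs_add x m).
Proof. intro Hm. apply inf_of_lb; [apply dist_set_lb | exists m; auto]. Qed.

Lemma dist_to_ge x c : (forall m, M m -> c <= ns_norm (vs_add x m)) -> c <= dist_to x.
Proof. intro Hc. apply inf_of_greatest; [apply dist_set_ne|]. intros r [m [Hm ->]]. auto. Qed.

Lemma dist_to_ge0 x : 0 <= dist_to x.
Proof. apply dist_to_ge. intros. apply ns_norm_ge0. Qed.

Lemma dist_to_le_norm x : dist_to x <= ns_norm x.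
Proof. rewrite <- (vs_add_0_r X x) at 2. apply dist_to_le, HM. Qed.

Lemma dist_to_approx x eps : 0 < eps -> exists m, M m /\ ns_norm (vs_add x m) < dist_to x + eps.
Proof.
  intro He. destruct (inf_of_approx _ eps (dist_set_lb x) (dist_set_ne x) He)
    as [r [[m [Hm ->]] Hr]].
  exists m. auto.
Qed.

Lemma dist_to_sublinear : sublinear_on (fun _ => True) dist_to.
Proof.
  pose proof HM as [_ [Ma Ms]]. split.
  - intros u v _ _. apply Rle_plus_epsilon. intros eps He.
    destruct (dist_to_approx u (eps / 2) ltac:(lra)) as [m1 [H1 K1]].
    destruct (dist_to_approx v (eps / 2) ltac:(lra)) as [m2 [H2 K2]].
    pose proof (dist_to_le (vs_add u v) (vs_add m1 m2) (Ma _ _ H1 H2)) as K.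
    rewrite vs_add_ACA in K. pose proof (ns_norm_triangle X (vs_add u m1) (vs_add v m2)). lra.
  - intros t u Ht _. apply Rle_plus_epsilon. intros eps He.
    destruct (dist_to_approx u (eps / t) ltac:(apply Rdiv_lt_0_compat; lra)) as [m [H1 K1]].
    pose proof (dist_to_le (vs_scal t u) (vs_scal t m) (Ms _ _ H1)) as K.
    rewrite <- vs_scal_distr_v, ns_norm_scal, Rabs_pos_eq in K by lra.
    apply (Rmult_lt_compat_l t) in K1; [|lra].
    replace (t * (dist_to u + eps / t)) with (t * dist_to u + eps) in K1 by (field; lra). lra.
Qed.

Lemma dist_to_pos x : seq_closed -> ~ M x -> 0 < dist_to x.
Proof.
  intros Hcl HnM. pose proof HM as [_ [_ Ms]].
  destruct (dist_to_ge0 x) as [H|H]; [exact H|]. exfalso. apply HnM.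
  assert (Hch : forall n : nat, exists m, M m /\ ns_norm (vs_add x m) < dist_to x + / INR (S n))
    by (intro n; apply dist_to_approx, Rinv_0_lt_compat, lt_0_INR; lia).
  destruct (choice _ Hch) as [mm Hmm].
  apply (Hcl (fun n => vs_opp (mm n))).
  - intro i. rewrite <- vs_scal_m1. apply Ms, Hmm.
  - intros eps He. destruct (archimed_cor1 eps He) as [N [HN HN0]]. exists N. intros n Hn.
    unfold vs_sub. rewrite vs_add_comm, <- vs_opp_add, ns_norm_opp.
    destruct (Hmm n) as [_ K]. rewrite <- H in K.
    assert (/ INR (S n) <= / INR N) by (apply Rinv_le_contravar; [apply lt_0_INR; lia | apply le_INR; lia]).
    lra.
Qed.

(* Extend [0] on [M] to [M + R x] with value [c] at [x], then to all of [X], dominated by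
   [dist_to <= ns_norm]. *)
Lemma separating_functional x c : ~ M x -> 0 <= c ->
  (forall m, M m -> c <= ns_norm (vs_add x m)) ->
  exists f, bounded_by f 1 /\ (forall m, M m -> f m = 0) /\ f x = c.
Proof.
  intros HnM Hc Hcm. pose proof HM as [M0 _].
  assert (Hlin0 : linear_on M (fun _ => 0)) by (split; intros; ring).
  destruct (extend_by_one X (fun _ => True) M dist_to (fun _ => 0) (subspace_full X)
              dist_to_sublinear HM (fun _ _ => I) Hlin0 (fun z _ => dist_to_ge0 z) x c I HnM)
    as [E' [g' [HE' [_ [HME' [Hg0 [Hlin' [Hle' [HxE' Hgx]]]]]]]]].
  - intros e He. rewrite Rplus_0_l. apply dist_to_ge. intros m Hm.
    replace (vs_add (vs_add e x) m) with (vs_add x (vs_add e m))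
      by (rewrite (vs_add_comm X e x); apply vs_add_assoc).
    apply Hcm, HM; auto.
  - intros e He. pose proof (dist_to_ge0 (vs_add e (vs_opp x))). lra.
  - destruct (hahn_banach X (fun _ => True) E' dist_to g' (subspace_full X) dist_to_sublinear
                HE' (fun _ _ => I) Hlin' Hle') as [F [[HFa HFs] [HFle HFl]]].
    exists F. split; [split; [split|]|split].
    + intros u v. apply HFa; exact I.
    + intros a u. apply HFs; exact I.
    + intro v. rewrite Rmult_1_l. apply Rabs_le. split.
      * pose proof (HFle (vs_opp v) I). pose proof (dist_to_le_norm (vs_opp v)).
        assert (F (vs_opp v) = - F v) by (rewrite <- vs_scal_m1, HFs by exact I; ring).
        rewrite ns_norm_opp in H0. lra.
      * pose proof (HFle v I). pose proof (dist_to_le_norm v). lra.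
    + intros m Hm. rewrite HFl by auto. apply Hg0, Hm.
    + rewrite HFl by auto. exact Hgx.
Qed.

Lemma annihilator_separates x : seq_closed -> ~ M x ->
  exists f, bounded_by f 1 /\ (forall m, M m -> f m = 0) /\ f x <> 0.
Proof.
  intros Hcl HnM. pose proof (dist_to_pos x Hcl HnM).
  destruct (separating_functional x (dist_to x) HnM ltac:(lra)) as [f [Hf [Hf0 Hfx]]].
  - intros m Hm. apply dist_to_le, Hm.
  - exists f. split; [|split]; auto. lra.
Qed.

End DistanceToSubspace.

Lemma norming_functional {X : NormedSpace} (x : X) : exists f, bounded_by f 1 /\ f x = ns_norm x.
Proof.
  assert (H0 : is_subspace (fun v : X => v = vs_zero)).
  { split; [reflexivity|split].
    - intros a b -> ->. apply vs_add_0.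
    - intros a v ->. apply vs_scal_0_r. }
  destruct (classic (x = vs_zero)) as [->|Hx].
  - exists (fun _ => 0). rewrite ns_norm_zero. split; [split; [split|]|]; intros; simpl; try ring.
    rewrite Rabs_R0, Rmult_1_l. apply ns_norm_ge0.
  - destruct (separating_functional X _ H0 x (ns_norm x) Hx) as [f [Hf [_ Hfx]]].
    + apply ns_norm_ge0.
    + intros m ->. rewrite vs_add_0_r. lra.
    + exists f. auto.
Qed.

Definition fun_vs (X : Type) : VecSpace.
Proof.
  refine (Build_VecSpace (X -> R) (fun _ => 0) (fun f g x => f x + g x) (fun f x => - f x)
            (fun a f x => a * f x) _ _ _ _ _ _ _ _);
  intros; apply functional_extensionality; intro; ring.
Defined.

Section DualNorm.
Variable X : NormedSpace.
Implicit Types f g : X -> R.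

Definition dual_norm f : R := sup_of (fun r => exists x, ns_norm x <= 1 /\ r = Rabs (f x)).

Lemma dual_elt_add_eq f x y : dual_elt f -> f (vs_add x y) = f x + f y.
Proof. intros [M [[Ha _] _]]. apply Ha. Qed.

Lemma dual_elt_scal_eq f a x : dual_elt f -> f (vs_scal a x) = a * f x.
Proof. intros [M [[_ Hs] _]]. apply Hs. Qed.

Lemma bounded_by_scal f a M : bounded_by f M -> bounded_by (fun x => a * f x) (Rabs a * M).
Proof.
  intros [[Ha Hs] Hb]. split; [split|]; simpl.
  - intros x y. rewrite Ha. simpl. ring.
  - intros b x. rewrite Hs. simpl. ring.
  - intro x. rewrite Rabs_mult, Rmult_assoc. apply Rmult_le_compat_l; [apply Rabs_pos | apply Hb].
Qed.

Lemma dual_elt_add f g : dual_elt f -> dual_elt g -> dual_elt (fun x => f x + g x).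
Proof.
  intros [M1 [[Ha1 Hs1] Hb1]] [M2 [[Ha2 Hs2] Hb2]]. exists (M1 + M2). split; [split|]; simpl.
  - intros x y. rewrite Ha1, Ha2. simpl. ring.
  - intros a x. rewrite Hs1, Hs2. simpl. ring.
  - intro x. eapply Rle_trans; [apply Rabs_triang|]. pose proof (Hb1 x). pose proof (Hb2 x). lra.
Qed.

Lemma dual_elt_subspace : is_subspace (X := fun_vs X) dual_elt.
Proof.
  split; [|split].
  - exists 0. split; [split|]; intros; simpl; try ring. rewrite Rabs_R0. lra.
  - apply dual_elt_add.
  - intros a f [M Hf]. exists (Rabs a * M). apply bounded_by_scal, Hf.
Qed.

Let unit_ball_image f := fun r => exists x, ns_norm x <= 1 /\ r = Rabs (f x).

Let unit_ball_image_ne f : exists r, unit_ball_image f r.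
Proof. exists (Rabs (f vs_zero)), vs_zero. rewrite ns_norm_zero. split; [lra | reflexivity]. Qed.

Let unit_ball_image_bound f : dual_elt f -> bound (unit_ball_image f).
Proof.
  intros [M [_ Hb]]. exists (Rabs M). intros r [x [Hx ->]].
  eapply Rle_trans; [apply Hb|]. pose proof (ns_norm_ge0 X x). pose proof (Rle_abs M).
  pose proof (Rabs_pos M). nra.
Qed.

Lemma dual_norm_ge0 f : dual_elt f -> 0 <= dual_norm f.
Proof.
  intro Hf. eapply Rle_trans; [apply (Rabs_pos (f vs_zero))|].
  apply sup_of_ub; [apply unit_ball_image_bound, Hf|]. exists vs_zero.
  rewrite ns_norm_zero. split; [lra | reflexivity].
Qed.

Lemma dual_norm_bound f x : dual_elt f -> Rabs (f x) <= dual_norm f * ns_norm x.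
Proof.
  intro Hf. destruct (ns_norm_ge0 X x) as [Hn|Hn].
  - set (x' := vs_scal (/ ns_norm x) x).
    assert (Hx' : ns_norm x' = 1).
    { unfold x'. rewrite ns_norm_scal, Rabs_pos_eq by (left; apply Rinv_0_lt_compat, Hn).
      field. lra. }
    assert (H : Rabs (f x') <= dual_norm f).
    { apply sup_of_ub; [apply unit_ball_image_bound, Hf|]. exists x'. split; [lra | reflexivity]. }
    unfold x' in H. rewrite dual_elt_scal_eq, Rabs_mult, Rabs_pos_eq in H
      by (auto; left; apply Rinv_0_lt_compat, Hn).
    apply (Rmult_le_compat_r (ns_norm x)) in H; [|lra].
    replace (/ ns_norm x * Rabs (f x) * ns_norm x) with (Rabs (f x)) in H by (field; lra). exact H.
  - symmetry in Hn. apply ns_norm_def in Hn. subst x.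
    assert (f vs_zero = 0) as ->
      by (rewrite <- (vs_scal_0_l X vs_zero), dual_elt_scal_eq by exact Hf; ring).
    rewrite Rabs_R0, ns_norm_zero. lra.
Qed.

Lemma dual_norm_bounded_by f : dual_elt f -> bounded_by f (dual_norm f).
Proof. intros Hf. split; [destruct Hf as [M [Hlin _]]; exact Hlin|]. intro x. apply dual_norm_bound, Hf. Qed.

Lemma dual_norm_le f M : bounded_by f M -> 0 <= M -> dual_norm f <= M.
Proof.
  intros Hb HM. apply sup_of_least; [apply unit_ball_image_ne|]. intros r [x [Hx ->]].
  eapply Rle_trans; [apply (proj2 Hb)|]. nra.
Qed.

Lemma dual_norm_triangle f g : dual_elt f -> dual_elt g ->
  dual_norm (fun x => f x + g x) <= dual_norm f + dual_norm g.
Proof.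
  intros Hf Hg. apply sup_of_least; [apply unit_ball_image_ne|]. intros r [x [Hx ->]].
  eapply Rle_trans; [apply Rabs_triang|].
  pose proof (dual_norm_bound f x Hf). pose proof (dual_norm_bound g x Hg).
  pose proof (dual_norm_ge0 f Hf). pose proof (dual_norm_ge0 g Hg). pose proof (ns_norm_ge0 X x).
  nra.
Qed.

Lemma dual_norm_scal_le f t : 0 < t -> dual_elt f -> dual_norm (fun x => t * f x) <= t * dual_norm f.
Proof.
  intros Ht Hf. apply sup_of_least; [apply unit_ball_image_ne|]. intros r [x [Hx ->]].
  rewrite Rabs_mult, Rabs_pos_eq by lra. apply Rmult_le_compat_l; [lra|].
  pose proof (dual_norm_bound f x Hf). pose proof (dual_norm_ge0 f Hf). pose proof (ns_norm_ge0 X x).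
  nra.
Qed.

Lemma scaled_dual_norm_sublinear d : 0 <= d ->
  sublinear_on (X := fun_vs X) dual_elt (fun f => d * dual_norm f).
Proof.
  intro Hd. split.
  - intros f g Hf Hg. pose proof (dual_norm_triangle f g Hf Hg). simpl. nra.
  - intros t f Ht Hf. pose proof (dual_norm_scal_le f t Ht Hf). simpl. nra.
Qed.

End DualNorm.

Section Proximinal.
Variables (X : NormedSpace) (M : X -> Prop) (y : X).
Hypotheses (HM : is_subspace M) (Hcl : seq_closed X M).

Let d := dist_to X M y.

Definition annihilator (f : X -> R) : Prop := dual_elt f /\ forall m, M m -> f m = 0.

Lemma annihilator_subspace : is_subspace (X := fun_vs X) annihilator.
Proof.
  split; [|split].
  - split; [apply dual_elt_subspace | reflexivity].
  - intros f g [Hf Hf0] [Hg Hg0]. split; [apply dual_elt_add; auto|].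
    intros m Hm. simpl. rewrite Hf0, Hg0 by auto. ring.
  - intros a f [Hf Hf0]. split; [apply dual_elt_subspace, Hf|].
    intros m Hm. simpl. rewrite Hf0 by auto. ring.
Qed.

Lemma annihilator_eval_le f : annihilator f -> f y <= d * dual_norm X f.
Proof.
  intros [Hf Hf0].
  assert (Hall : forall m, M m -> f y <= dual_norm X f * ns_norm (vs_add y m)).
  { intros m Hm. rewrite <- (Rplus_0_r (f y)), <- (Hf0 m Hm), <- dual_elt_add_eq by exact Hf.
    eapply Rle_trans; [apply Rle_abs | apply dual_norm_bound, Hf]. }
  destruct (dual_norm_ge0 X f Hf) as [Hpos|Hzero].
  - enough (f y / dual_norm X f <= d) as H.
    { apply (Rmult_le_compat_r (dual_norm X f)) in H; [|lra].
      unfold Rdiv in H. rewrite Rmult_assoc, Rinv_l, Rmult_1_r in H by lra. lra. }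
    apply dist_to_ge; [exact HM|]. intros m Hm. specialize (Hall m Hm).
    apply (Rmult_le_reg_l (dual_norm X f)); [exact Hpos|]. field_simplify; lra.
  - specialize (Hall vs_zero (proj1 HM)). rewrite <- Hzero, Rmult_0_l in *. rewrite Rmult_0_r. exact Hall.
Qed.

Lemma dominated_functional_bounded (F : (X -> R) -> R) :
  linear_on (X := fun_vs X) dual_elt F -> (forall f, dual_elt f -> F f <= d * dual_norm X f) ->
  forall f Mf, bounded_by f Mf -> Rabs (F f) <= d * Mf.
Proof.
  intros [_ HFs] HFp f Mf Hb.
  assert (Hf : dual_elt f) by (exists Mf; exact Hb).
  assert (Hd : 0 <= d) by (apply dist_to_ge0, HM).
  assert (Habs : Rabs (F f) <= d * dual_norm X f).
  { assert (Hopp : dual_norm X (fun x => -1 * f x) <= dual_norm X f).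
    { apply dual_norm_le; [|apply dual_norm_ge0, Hf].
      rewrite <- (Rmult_1_l (dual_norm X f)), <- Rabs_R1, <- (Rabs_Ropp 1).
      apply bounded_by_scal, dual_norm_bounded_by, Hf. }
    pose proof (HFs (-1) f Hf) as E. simpl in E.
    pose proof (HFp _ (proj2 (proj2 (dual_elt_subspace X)) (-1) f Hf)) as K. simpl in K.
    pose proof (HFp f Hf). apply Rabs_le. nra. }
  destruct (Rle_or_lt 0 Mf) as [HMf|HMf].
  - pose proof (dual_norm_le X f Mf Hb HMf). nra.
  - assert (Hy : ns_norm y = 0).
    { pose proof (proj2 Hb y). pose proof (Rabs_pos (f y)). pose proof (ns_norm_ge0 X y). nra. }
    assert (d = 0) as Hd0 by (pose proof (dist_to_le_norm X M HM y); fold d in H; lra).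
    rewrite Hd0, Rmult_0_l in Habs |- *. exact Habs.
Qed.

Theorem reflexive_proximinal : reflexive X ->
  exists m0, M m0 /\ forall m, M m -> ns_norm (vs_add y m0) <= ns_norm (vs_add y m).
Proof.
  intros Hrefl.
  assert (Hd : 0 <= d) by (apply dist_to_ge0, HM).
  destruct (hahn_banach (fun_vs X) dual_elt annihilator (fun f => d * dual_norm X f) (fun f => f y)
              (dual_elt_subspace X) (scaled_dual_norm_sublinear X d Hd) annihilator_subspace
              (fun f h => proj1 h) ltac:(split; reflexivity) annihilator_eval_le)
    as [F [HFlin [HFp HFl]]].
  destruct (Hrefl F) as [z Hz].
  - intros f g Hf Hg. exact (proj1 HFlin f g Hf Hg).
  - intros a f Hf. exact (proj2 HFlin a f Hf).
  - exists d. apply dominated_functional_bounded; assumption.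
  - exists (vs_sub z y). split.
    + apply NNPP. intro Hn.
      destruct (annihilator_separates X M HM (vs_sub z y) Hcl Hn) as [f [Hf1 [Hf0 Hfz]]].
      assert (Hf : dual_elt f) by (exists 1; exact Hf1).
      assert (E : F f = f y) by (apply HFl; split; assumption).
      rewrite Hz in E by exact Hf. apply Hfz. unfold vs_sub.
      rewrite dual_elt_add_eq, <- vs_scal_m1, dual_elt_scal_eq, E by exact Hf. ring.
    + intros m Hm. rewrite vs_add_subK.
      destruct (norming_functional z) as [f [Hf1 Hfz]].
      assert (Hf : dual_elt f) by (exists 1; exact Hf1).
      rewrite <- Hfz, <- Hz by exact Hf.
      pose proof (HFp f Hf). pose proof (dual_norm_le X f 1 Hf1 ltac:(lra)).
      pose proof (dist_to_le X M y m Hm). fold d in H1. nra.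
Qed.

End Proximinal.

Section Sequences.
Variable X : NormedSpace.

Lemma cauchy_of_converges (x : nat -> X) l : converges x l -> cauchy x.
Proof.
  intros Hx eps He. destruct (Hx (eps / 2) ltac:(lra)) as [N HN]. exists N. intros m n Hm Hn.
  pose proof (ns_norm_sub_triangle X (x m) l (x n)). pose proof (HN m Hm). pose proof (HN n Hn).
  rewrite ns_norm_sub_sym in H1. lra.
Qed.

Lemma cauchy_lipschitz_pullback {Y : NormedSpace} (k : nat -> Y) (w : nat -> X) C : 0 < C ->
  (forall m n, ns_norm (vs_sub (k m) (k n)) <= C * ns_norm (vs_sub (w m) (w n))) ->
  cauchy w -> cauchy k.
Proof.
  intros HC Hk Hw eps He. destruct (Hw (eps / C)) as [N HN]; [apply Rdiv_lt_0_compat; lra|].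
  exists N. intros m n Hm Hn. specialize (HN m n Hm Hn).
  apply (Rmult_lt_compat_l C) in HN; [|exact HC].
  replace (C * (eps / C)) with eps in HN by (field; lra). pose proof (Hk m n). lra.
Qed.

Lemma converges_sub_r (x : nat -> X) l c :
  converges x l -> converges (fun i => vs_sub (x i) c) (vs_sub l c).
Proof.
  intros Hx eps He. destruct (Hx eps He) as [N HN]. exists N. intros n Hn.
  rewrite vs_sub_sub_r. auto.
Qed.

Lemma eq_of_dominated_by_limit (w : nat -> X) l a : converges w l ->
  (forall n, ns_norm (vs_sub a (w n)) <= ns_norm (vs_sub l (w n))) -> a = l.
Proof.
  intros Hw Hdom. apply vs_sub_eq0, ns_norm_eq0, Rle_plus_epsilon. intros eps He.
  destruct (Hw (eps / 2) ltac:(lra)) as [N HN]. specialize (HN N (le_n N)).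
  pose proof (Hdom N). rewrite (ns_norm_sub_sym X l (w N)) in H.
  pose proof (ns_norm_sub_triangle X a (w N) l). lra.
Qed.

End Sequences.

Section Dirichlet.
Variables (V : NormedSpace) (Vt : VecSpace) (W : NormedSpace) (Wt : VecSpace)
  (iV : V -> Vt) (iW : W -> Wt) (Rel : Vt -> Wt -> Prop) (gr : V -> W) (K0 : V -> Prop) (C : R).
Hypotheses (HiV : is_linear iV) (HiW : is_linear iW) (HR : gradient_relation Rel)
  (HRclosed : forall (u : V) (ui : nat -> V) (g : W) (gi : nat -> W),
     (forall i, Rel (iV (ui i)) (iW (gi i))) -> converges ui u -> converges gi g -> Rel (iV u) (iW g))
  (HRopp : forall (u : V) (g : W), Rel (iV u) (iW g) -> exists g' : W, Rel (iV (vs_opp u)) (iW g'))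
  (Hgr : forall u, Sob iV iW Rel u -> is_min_gradient iV iW Rel u (gr u))
  (Hgr_add : forall u v, Sob iV iW Rel u -> Sob iV iW Rel v -> gr (vs_add u v) = vs_add (gr u) (gr v))
  (Hgr_scal : forall a u, Sob iV iW Rel u -> gr (vs_scal a u) = vs_scal a (gr u))
  (HK0sub : forall u, K0 u -> Sob iV iW Rel u)
  (HK0ne : exists u, K0 u)
  (HK0add : forall u v, K0 u -> K0 v -> K0 (vs_add u v))
  (HK0scal : forall a u, K0 u -> K0 (vs_scal a u))
  (HC : 0 < C)
  (HK0poincare : forall u g, K0 u -> Rel (iV u) (iW g) -> ns_norm u <= C * ns_norm g).

Local Notation Sobolev := (Sob iV iW Rel).

Lemma Sob_add u v : Sobolev u -> Sobolev v -> Sobolev (vs_add u v).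
Proof.
  intros [g1 H1] [g2 H2]. exists (vs_add g1 g2).
  rewrite (proj1 HiV), (proj1 HiW). apply HR; assumption.
Qed.

Lemma Sob_scal_pos t u : 0 < t -> Sobolev u -> Sobolev (vs_scal t u).
Proof.
  intros Ht [g H]. exists (vs_scal t g). rewrite (proj2 HiV), (proj2 HiW). apply HR; assumption.
Qed.

Lemma Sob_opp u : Sobolev u -> Sobolev (vs_opp u).
Proof. intros [g H]. exact (HRopp u g H). Qed.

Lemma gr_sub u v : Sobolev u -> Sobolev v -> gr (vs_sub u v) = vs_sub (gr u) (gr v).
Proof.
  intros Hu Hv. unfold vs_sub. rewrite Hgr_add by (auto; apply Sob_opp, Hv).
  rewrite <- !vs_scal_m1, Hgr_scal by exact Hv. reflexivity.
Qed.

Lemma gr_rel u : Sobolev u -> Rel (iV u) (iW (gr u)).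
Proof. intro Hu. apply (Hgr u Hu). Qed.

Lemma K0_sub u v : K0 u -> K0 v -> K0 (vs_sub u v).
Proof. intros Hu Hv. unfold vs_sub. rewrite <- vs_scal_m1. auto. Qed.

Lemma K0_poincare_sub u v : K0 u -> K0 v ->
  ns_norm (vs_sub u v) <= C * ns_norm (vs_sub (gr u) (gr v)).
Proof.
  intros Hu Hv. rewrite <- gr_sub by auto. apply HK0poincare; [apply K0_sub; auto|].
  apply gr_rel, HK0sub, K0_sub; auto.
Qed.

Definition grad_image (w : W) : Prop := exists k, K0 k /\ w = gr k.

Lemma grad_image_subspace : is_subspace grad_image.
Proof.
  destruct HK0ne as [k Hk]. split; [|split].
  - exists (vs_scal 0 k). rewrite Hgr_scal, (vs_scal_0_l W) by auto. split; auto.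
  - intros x y [k1 [H1 ->]] [k2 [H2 ->]]. exists (vs_add k1 k2). split; [auto | rewrite Hgr_add; auto].
  - intros a x [k' [H ->]]. exists (vs_scal a k'). split; [auto | rewrite Hgr_scal; auto].
Qed.

Lemma grad_image_closed : banach V ->
  (forall (ui : nat -> V) u, (forall i, K0 (ui i)) -> converges ui u -> K0 u) ->
  seq_closed W grad_image.
Proof.
  intros HV HK0closed w lim Hw Hconv.
  destruct (choice _ Hw) as [kk Hkk].
  assert (Hcau : cauchy kk).
  { apply (cauchy_lipschitz_pullback W kk w C HC); [|exact (cauchy_of_converges W w lim Hconv)].
    intros m n. destruct (Hkk m) as [Km ->], (Hkk n) as [Kn ->]. apply K0_poincare_sub; auto. }
  destruct (HV kk Hcau) as [k Hk].
  assert (Kk : K0 k) by (apply (HK0closed kk k); [intro i; apply Hkk | exact Hk]).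
  exists k. split; [exact Kk|]. symmetry.
  apply (eq_of_dominated_by_limit W w lim (gr k) Hconv). intro n. destruct (Hkk n) as [Kn En].
  assert (Hrel : Rel (iV (vs_sub k (kk n))) (iW (vs_sub lim (w n)))).
  { apply (HRclosed _ (fun i => vs_sub (kk i) (kk n)) _ (fun i => vs_sub (w i) (w n))).
    - intro i. destruct (Hkk i) as [Ki ->]. rewrite En, <- gr_sub by auto.
      apply gr_rel, HK0sub, K0_sub; auto.
    - apply converges_sub_r, Hk.
    - apply converges_sub_r, Hconv. }
  rewrite En, <- gr_sub by auto. apply (Hgr _ (HK0sub _ (K0_sub _ _ Kk Kn))). rewrite <- En. exact Hrel.
Qed.

Lemma dirichlet_exists f : Sobolev f -> reflexive W -> seq_closed W grad_image ->
  exists u, dirichlet_solution iV iW Rel gr K0 f u.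
Proof.
  intros Hf HWrefl Hcl.
  destruct (reflexive_proximinal W grad_image (gr f) grad_image_subspace Hcl HWrefl)
    as [m0 [[k0 [Hk0 ->]] Hmin]].
  exists (vs_add f k0). split; [split|].
  - apply Sob_add; auto.
  - rewrite vs_sub_addK. exact Hk0.
  - intros v [Sv Kv]. rewrite Hgr_add by auto. rewrite <- (vs_add_subK V v f), Hgr_add by auto.
    apply Hmin. exists (vs_sub v f). auto.
Qed.

Lemma dirichlet_solution_gr_eq f u u' : strictly_convex W ->
  dirichlet_solution iV iW Rel gr K0 f u -> dirichlet_solution iV iW Rel gr K0 f u' -> gr u = gr u'.
Proof.
  intros Hsc [[Su Ku] Hmin] [[Su' Ku'] Hmin'].
  assert (Hnorm : ns_norm (gr u) = ns_norm (gr u'))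
    by (apply Rle_antisym; [apply Hmin | apply Hmin']; split; assumption).
  set (mid := vs_scal (/ 2) (vs_add u u')).
  assert (Smid : Sobolev mid) by (apply Sob_scal_pos; [lra | apply Sob_add; auto]).
  assert (Kmid : Kf iV iW Rel K0 f mid)
    by (split; [exact Smid | unfold mid; rewrite vs_sub_midpoint; auto]).
  apply NNPP. intro Hne.
  pose proof (strictly_convex_midpoint W (gr u) (gr u') Hsc Hne Hnorm) as Hlt.
  rewrite <- Hgr_add, <- Hgr_scal in Hlt by (auto; apply Sob_add; auto).
  pose proof (Hmin mid Kmid). fold mid in Hlt. lra.
Qed.

Lemma dirichlet_unique f u u' : strictly_convex W ->
  dirichlet_solution iV iW Rel gr K0 f u -> dirichlet_solution iV iW Rel gr K0 f u' -> u' = u.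
Proof.
  intros Hsc Hu Hu'. pose proof (dirichlet_solution_gr_eq f u u' Hsc Hu Hu') as Hgr_eq.
  destruct Hu as [[Su Ku] _], Hu' as [[Su' Ku'] _].
  assert (Kd : K0 (vs_sub u' u)) by (rewrite <- (vs_sub_sub_r V u' u f); apply K0_sub; auto).
  pose proof (HK0poincare _ (gr (vs_sub u' u)) Kd (gr_rel _ (HK0sub _ Kd))) as Hp.
  rewrite gr_sub, Hgr_eq in Hp by auto. unfold vs_sub at 2 in Hp.
  rewrite vs_add_opp, ns_norm_zero, Rmult_0_r in Hp.
  apply vs_sub_eq0, ns_norm_eq0, Hp.
Qed.

End Dirichlet.

Theorem mainTheorem7
  (V : NormedSpace) (Vt : VecSpace) (W : NormedSpace) (Wt : VecSpace)
  (iV : V -> Vt) (iW : W -> Wt) (Rel : Vt -> Wt -> Prop)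
  (HU : gradient_space V Vt W Wt iV iW Rel)
  (gr : V -> W)
  (Hgr : forall u, Sob iV iW Rel u -> is_min_gradient iV iW Rel u (gr u))
  (Hlin_add : forall u v, Sob iV iW Rel u -> Sob iV iW Rel v ->
                gr (vs_add u v) = vs_add (gr u) (gr v))
  (Hlin_scal : forall a u, Sob iV iW Rel u -> gr (vs_scal a u) = vs_scal a (gr u))
  (K0 : V -> Prop)
  (HK0sub : forall u, K0 u -> Sob iV iW Rel u)
  (HK0ne : exists u, K0 u)
  (HK0add : forall u v, K0 u -> K0 v -> K0 (vs_add u v))
  (HK0scal : forall a u, K0 u -> K0 (vs_scal a u))
  (HK0closed : forall (ui : nat -> V) (u : V), (forall i, K0 (ui i)) -> converges ui u -> K0 u)
  (HK0P : poincare_set iV iW Rel K0) :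
  forall f, Sob iV iW Rel f ->
    exists u, dirichlet_solution iV iW Rel gr K0 f u /\
      forall u', dirichlet_solution iV iW Rel gr K0 f u' -> u' = u.
Proof.
  intros f Hf.
  destruct HU as [HiV [_ [HiW [_ [HR [[HV _] [[_ [HWrefl HWconvex]] [HRopp HRclosed]]]]]]]].
  destruct HK0P as [_ [C [HC HK0poincare]]].
  assert (Hcl : seq_closed W (grad_image V W gr K0))
    by (eapply grad_image_closed; eassumption).
  assert (Hex : exists u, dirichlet_solution iV iW Rel gr K0 f u)
    by (eapply dirichlet_exists; eassumption).
  destruct Hex as [u Hu].
  exists u. split; [exact Hu|].
  intros u' Hu'. eapply dirichlet_unique; eassumption.
Qed.
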